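(* For all integers $L\ge 0$ and $n\ge 0$, $A_{L,0}(n)\ge A_{L,1}(n)$, and the inequality is strict whenever $L\ge 1$ and $n\notin\{0,3,5,6\}$.
   Context: For $i\in\{0,1\}$, $A_{L,i}(n)$ denotes the number of partitions of $n$ into parts congruent to $\pm(1+2i)\pmod 8$ with largest part at most $8L-2i-1$; equivalently $\sum_{n\ge0}A_{L,i}(n)q^n = 1/\big((q^{1+2i};q^8)_L(q^{7-2i};q^8)_L\big)$ with $(a;q)_L=\prod_{j=0}^{L-1}(1-aq^j)$. *)

From mathcomp Require Import all_boot.
Set Implicit Arguments. Unset Strict Implicit. Unset Printing Implicit Defensive.

Definition allowed_part (L i p : nat) : bool :=
  [&& (p %% 8 == (1 + 2 * i) %% 8) || ((p + (1 + 2 * i)) %% 8 == 0)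
    & p <= 8 * L - 2 * i - 1].

(* A partition of n is encoded by its multiplicity function: m j is the
   multiplicity of the part j.+1 (for j < 8L, which covers all allowed parts;
   each multiplicity is at most n). *)
Definition partitions_A (L i n : nat) :=
  [set m : {ffun 'I_(8 * L) -> 'I_n.+1} |
     [forall j, (0 < m j) ==> allowed_part L i j.+1]
     && (\sum_(j < 8 * L) j.+1 * m j == n)].

Definition A (L i n : nat) : nat := #|partitions_A L i n|.

From mathcomp Require Import all_boot zify.
Set Implicit Arguments. Unset Strict Implicit. Unset Printing Implicit Defensive.

(** Block k of a partition counted by A_{L,1} holds its parts 8k+3 and 8k+5; let C
   and D be the numbers of its parts congruent to 3 and to 5 (mod 8).  If C >= D,
   turn each part 8k+3 into 8k+1 and each 8k+5 into 8k+7, and restore the lost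
   weight 2(C-D) as ones.  If C < D, turn 8k+3 into 8k+7 and 8k+5 into 8k+1, and
   restore the lost weight 4(D-C) as ones, or as 4(D-C)-7 ones and one 7 when
   3 | D-C.  The excess x of parts 1 over parts 7 (mod 8) of the image is then
   divisible by 3, congruent to 7 (mod 15), or divisible by 5 but not by 3, so x
   tells which case occurred and the map can be undone.  Hence A_{L,1}(n) <=
   A_{L,0}(n); when n is not 0, 3, 5, 6, some partition of n into e ones and f
   sevens has f > e or e - f of none of these three forms, so it is missed. *)

Lemma big_ord_blocks (R : Type) (idx : R) (op : Monoid.law idx) d L (F : nat -> R) :
  \big[op/idx]_(j < d * L) F j = \big[op/idx]_(k < L) \big[op/idx]_(r < d) F (d * k + r).
Proof.
elim: L => [|L IH]; first by rewrite muln0 !big_ord0.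
by rewrite mulnS addnC big_split_ord /= [RHS]big_ord_recr /= IH.
Qed.

Lemma sum_weighted_le N (g : nat -> nat) n j :
  \sum_(i < N) i.+1 * g i = n -> j < N -> g j <= n.
Proof.
move=> <- hj; rewrite (bigD1 (Ordinal hj)) //=.
exact: leq_trans (leq_pmull _ _) (leq_addr _ _).
Qed.

(* A pair (a, b) stands for the partition counted by A_{L,i} in which the parts
   8k+1+2i and 8k+7-2i have multiplicities a k and b k. *)
Definition mults := ((nat -> nat) * (nat -> nat))%type.

Section BlockMultiplicities.
Variable L : nat.

Definition nparts (a : nat -> nat) := \sum_(k < L) a k.
Definition moment (a : nat -> nat) := \sum_(k < L) 8 * k * a k.
Definition weight i (p : mults) :=
  \sum_(k < L) ((8 * k + 1 + 2 * i) * p.1 k + (8 * k + 7 - 2 * i) * p.2 k).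

Definition agree (p q : mults) := forall k, k < L -> p.1 k = q.1 k /\ p.2 k = q.2 k.

Lemma nparts_agree p q : agree p q -> nparts p.1 = nparts q.1 /\ nparts p.2 = nparts q.2.
Proof. by move=> h; split; apply: eq_bigr => k _; case: (h k (ltn_ord k)). Qed.

Lemma weightE i p : i <= 1 ->
  weight i p = moment p.1 + moment p.2 + (1 + 2 * i) * nparts p.1 + (7 - 2 * i) * nparts p.2.
Proof.
move=> hi; rewrite /weight /moment /nparts !big_distrr -!big_split /=.
by apply: eq_bigr => k _; lia.
Qed.

Definition add_at0 (f : nat -> nat) x k := f k + (k == 0) * x.
Definition sub_at0 (f : nat -> nat) x k := f k - (k == 0) * x.

Lemma sub_at0K f x : sub_at0 (add_at0 f x) x =1 f.
Proof. by move=> k; rewrite /sub_at0 /add_at0 addnK. Qed.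

Hypothesis L_gt0 : 0 < L.

Lemma nparts_add_at0 f x : nparts (add_at0 f x) = nparts f + x.
Proof.
rewrite /nparts /add_at0 big_split /=; congr (_ + _).
by case: L L_gt0 => // L' _; rewrite big_ord_recl /= mul1n big1 ?addn0.
Qed.

Lemma moment_add_at0 f x : moment (add_at0 f x) = moment f.
Proof.
rewrite /moment /add_at0 -[RHS]addn0 (eq_bigr _ (fun k _ => mulnDr _ _ _)) big_split /=.
by congr (_ + _); apply: big1 => -[[|k] hk] _; rewrite ?muln0.
Qed.

Definition phi (p : mults) : mults :=
  let C := nparts p.1 in let D := nparts p.2 in
  if D <= C then (add_at0 p.1 (2 * (C - D)), p.2)
  else if 3 %| D - C then (add_at0 p.2 (4 * (D - C) - 7), add_at0 p.1 1)
  else (add_at0 p.2 (4 * (D - C)), p.1).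

Definition psi (q : mults) : mults :=
  let x := nparts q.1 - nparts q.2 in
  if 3 %| x then (sub_at0 q.1 (2 * (x %/ 3)), q.2)
  else if 5 %| x then (q.2, sub_at0 q.1 (4 * (x %/ 5)))
  else (sub_at0 q.2 1, sub_at0 q.1 (4 * ((x + 8) %/ 5) - 7)).

Lemma phi_weight p : weight 0 (phi p) = weight 1 p.
Proof.
rewrite /phi !weightE //; set C := nparts p.1; set D := nparts p.2.
case: leqP => [hDC|hCD]; last case: ifP => [h3|_];
  rewrite /= ?nparts_add_at0 ?moment_add_at0 -/C -/D; lia.
Qed.

Lemma psi_phi p : (psi (phi p)).1 =1 p.1 /\ (psi (phi p)).2 =1 p.2.
Proof.
rewrite /phi; set C := nparts p.1; set D := nparts p.2.
case: leqP => [hDC|hCD]; last case: ifP => h3; rewrite /psi /= !nparts_add_at0 -/C -/D.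
- have -> : C + 2 * (C - D) - D = 3 * (C - D) by lia.
  by rewrite dvdn_mulr // mulKn //=; split=> k /=; rewrite ?sub_at0K.
- rewrite !ifF; [|lia|lia].
  have -> : (D + (4 * (D - C) - 7) - (C + 1) + 8) %/ 5 = D - C by lia.
  by split=> k /=; rewrite sub_at0K.
- have -> : D + 4 * (D - C) - C = 5 * (D - C) by lia.
  rewrite ifF; last lia.
  by rewrite dvdn_mulr // mulKn //=; split=> k /=; rewrite ?sub_at0K.
Qed.

Lemma psi_agree p q : agree p q -> agree (psi p) (psi q).
Proof.
move=> h k hk; have [e1 e2] := nparts_agree h; have [h1 h2] := h k hk.
by rewrite /psi /sub_at0 e1 e2; case: ifP => _; [|case: ifP => _]; rewrite /= h1 h2.
Qed.

Lemma phi_inj_agree p q : agree (phi p) (phi q) -> agree p q.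
Proof.
move=> /psi_agree h k /h; have [p1 p2] := psi_phi p; have [q1 q2] := psi_phi q.
by rewrite p1 p2 q1 q2.
Qed.

Definition reachable e f := (f <= e) && [|| 3 %| e - f, 5 %| e - f | (e - f) %% 15 == 7].

Lemma phi_reachable p : reachable (nparts (phi p).1) (nparts (phi p).2).
Proof.
rewrite /phi; set C := nparts p.1; set D := nparts p.2.
case: leqP => [hDC|hCD]; last case: ifP => h3;
  rewrite /reachable /= !nparts_add_at0 -/C -/D; lia.
Qed.

End BlockMultiplicities.

Lemma exists_unreachable n : n \notin [:: 0; 3; 5; 6] ->
  exists2 f, 7 * f <= n & ~~ reachable (n - 7 * f) f.
Proof.
move=> hn; have [small|large] := ltnP n 49; last first.
  by exists (n %/ 7); rewrite /reachable; lia. (* n %/ 7 sevens outnumber n %% 7 ones *)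
have search : all (fun n => (n \in [:: 0; 3; 5; 6]) ||
  has (fun f => (7 * f <= n) && ~~ reachable (n - 7 * f) f) (iota 0 7)) (iota 0 49).
  by vm_compute.
have /allP/(_ n) := search; rewrite mem_iota (negbTE hn) => /(_ small) /hasP [f _].
by case/andP; exists f.
Qed.

Lemma partitions_A0 i i' n : partitions_A 0 i n = partitions_A 0 i' n.
Proof. by apply/setP => m; rewrite !inE; congr (_ && _); apply/forallP/forallP => _ []. Qed.

Section Encoding.
Variables L i n : nat.
Hypothesis i_le1 : i <= 1.
Local Notation P := (partitions_A L i n).
Local Notation multiplicities := {ffun 'I_(8 * L) -> 'I_n.+1}.

Lemma allowed_partE j :
  allowed_part L i j.+1 = (j < 8 * L) && ((j %% 8 == 2 * i) || (j %% 8 == 6 - 2 * i)).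
Proof. by rewrite /allowed_part; apply/idP/idP; lia. Qed.

Definition mult (m : multiplicities) j : nat :=
  if insub j : option 'I_(8 * L) is Some j' then m j' else 0.

Lemma multE m j (hj : j < 8 * L) : mult m j = m (Ordinal hj).
Proof. by rewrite /mult insubT. Qed.

Lemma mult_ord m (j : 'I_(8 * L)) : mult m j = m j.
Proof. by rewrite /mult valK. Qed.

Definition to_mults m : mults :=
  (fun k => mult m (8 * k + 2 * i), fun k => mult m (8 * k + (6 - 2 * i))).

Definition spread (p : mults) j :=
  if j %% 8 == 2 * i then p.1 (j %/ 8)
  else if j %% 8 == 6 - 2 * i then p.2 (j %/ 8) else 0.

Definition of_mults p : multiplicities := [ffun j : 'I_(8 * L) => inord (spread p j)].

Lemma spread_block p k r : r < 8 ->
  spread p (8 * k + r) = if r == 2 * i then p.1 k else if r == 6 - 2 * i then p.2 k else 0.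
Proof.
move=> hr; rewrite /spread; have -> : (8 * k + r) %% 8 = r by lia.
by have -> : (8 * k + r) %/ 8 = k by lia.
Qed.

Lemma weight_spread p : \sum_(j < 8 * L) j.+1 * spread p j = weight L i p.
Proof.
rewrite (big_ord_blocks _ 8 L (fun j => j.+1 * spread p j)) /weight; apply: eq_bigr => k _.
under eq_bigr => r _ do rewrite (spread_block _ _ (ltn_ord r)).
case: i i_le1 => [|[|]] // _; rewrite !big_ord_recl big_ord0 /= /bump /=; nia.
Qed.

Lemma spread_le p j : weight L i p = n -> j < 8 * L -> spread p j <= n.
Proof. by rewrite -weight_spread => /sum_weighted_le; apply. Qed.

Lemma spread_to_mults m : m \in P -> forall j : 'I_(8 * L), spread (to_mults m) j = m j.
Proof.
rewrite inE => /andP [/forallP allowed _] j; rewrite /spread /=.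
case: eqP => [hr|hr0].
  by rewrite (_ : 8 * (j %/ 8) + 2 * i = j) ?mult_ord //; lia.
case: eqP => [hr|hr1].
  by rewrite (_ : 8 * (j %/ 8) + (6 - 2 * i) = j) ?mult_ord //; lia.
apply/esym/eqP; rewrite -leqn0 leqNgt; apply/negP => /(implyP (allowed j)).
by rewrite allowed_partE; lia.
Qed.

Lemma to_multsK m : m \in P -> of_mults (to_mults m) = m.
Proof.
by move=> hm; apply/ffunP => j; apply/val_inj; rewrite ffunE spread_to_mults // inord_val.
Qed.

Lemma weight_to_mults m : m \in P -> weight L i (to_mults m) = n.
Proof.
move=> hm; rewrite -weight_spread; move: (hm); rewrite inE => /andP [_ /eqP <-].
by apply: eq_bigr => j _; rewrite spread_to_mults.
Qed.

Lemma of_mults_mem p : weight L i p = n -> of_mults p \in P.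
Proof.
move=> hw; rewrite inE; apply/andP; split.
  apply/forallP => j; rewrite ffunE inordK ?ltnS ?spread_le // allowed_partE ltn_ord /spread.
  by case: (_ == 2 * i); case: (_ == 6 - 2 * i); rewrite ?implybT.
apply/eqP; rewrite -[RHS]hw -weight_spread; apply: eq_bigr => j _.
by rewrite ffunE inordK // ltnS spread_le.
Qed.

Lemma of_multsK p : weight L i p = n -> agree L (to_mults (of_mults p)) p.
Proof.
move=> hw k hk; have h1 : 8 * k + 2 * i < 8 * L by lia.
have h2 : 8 * k + (6 - 2 * i) < 8 * L by lia.
rewrite /= (multE _ h1) (multE _ h2) !ffunE /= !inordK ?ltnS ?spread_le // !spread_block; try lia.
by rewrite eqxx ifF ?eqxx //; lia.
Qed.

Lemma to_mults_inj m1 m2 : m1 \in P -> m2 \in P -> agree L (to_mults m1) (to_mults m2) -> m1 = m2.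
Proof.
move=> h1 h2 e; rewrite -(to_multsK h1) -(to_multsK h2); apply/ffunP => j.
have hj : j %/ 8 < L by have := ltn_ord j; lia.
have [e1 e2] := e _ hj.
by rewrite !ffunE /spread e1 e2.
Qed.

End Encoding.

Section Injection.
Variables L n : nat.
Hypothesis L_gt0 : 0 < L.
Local Notation P0 := (partitions_A L 0 n).
Local Notation P1 := (partitions_A L 1 n).

Definition phi_part (m : {ffun 'I_(8 * L) -> 'I_n.+1}) := of_mults L 0 n (phi L (to_mults 1 m)).

Lemma to_mults_phi_part m : m \in P1 -> agree L (to_mults 0 (phi_part m)) (phi L (to_mults 1 m)).
Proof. by move=> hm; apply: of_multsK; rewrite // phi_weight // weight_to_mults. Qed.

Lemma phi_part_inj : {in P1 &, injective phi_part}.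
Proof.
move=> m1 m2 h1 h2 e; apply: (to_mults_inj (isT : 1 <= 1) h1 h2).
apply: (phi_inj_agree L_gt0) => k hk.
have [a1 b1] := to_mults_phi_part h1 hk; have [a2 b2] := to_mults_phi_part h2 hk.
by rewrite -a1 -b1 -a2 -b2 e.
Qed.

Lemma phi_part_image_sub : phi_part @: P1 \subset P0.
Proof.
apply/subsetP => _ /imsetP [m hm ->].
by apply: of_mults_mem; rewrite // phi_weight // weight_to_mults.
Qed.

Lemma phi_part_image_proper : n \notin [:: 0; 3; 5; 6] -> phi_part @: P1 \proper P0.
Proof.
move=> /exists_unreachable [f le_7f_n unreach]; set e := n - 7 * f.
set q : mults := (add_at0 (fun=> 0) e, add_at0 (fun=> 0) f).
have nparts0 : nparts L (fun=> 0) = 0 by apply: big1.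
have moment0 : moment L (fun=> 0) = 0 by apply: big1 => k _; rewrite muln0.
have wq : weight L 0 q = n.
  by rewrite weightE // !moment_add_at0 // !nparts_add_at0 // nparts0 moment0; lia.
apply/properP; split; first exact: phi_part_image_sub.
exists (of_mults L 0 n q); first exact: of_mults_mem.
apply/imsetP => -[m hm eq_q]; move/negP: unreach; apply.
have := phi_reachable L_gt0 (to_mults 1 m).
have [<- <-] := nparts_agree (to_mults_phi_part hm); rewrite -eq_q.
have [-> ->] := nparts_agree (of_multsK (isT : 0 <= 1) wq).
by rewrite /= !nparts_add_at0 // nparts0.
Qed.

End Injection.

Theorem theorem2 : forall L n : nat,
  A L 1 n <= A L 0 n /\
  (1 <= L -> n \notin [:: 0; 3; 5; 6] -> A L 1 n < A L 0 n).
Proof.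
move=> [|L] n; first by rewrite /A (partitions_A0 1 0).
have cardA1 : A L.+1 1 n = #|@phi_part L.+1 n @: partitions_A L.+1 1 n|.
  by rewrite card_in_imset //; exact: phi_part_inj.
rewrite cardA1; split; first exact/subset_leq_card/phi_part_image_sub.
by move=> _ hn; apply: proper_card; apply: phi_part_image_proper.
Qed.
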